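(* For every Scott-open subset $\mathcal U$ of $\mathcal Q\mathbb R_\ell$, the set $\{x\in\mathbb R:\{x\}\in\mathcal U\}$ is open in $\mathbb R_\ell$.
   Context: The Sorgenfrey line $\mathbb R_\ell$ is $\mathbb R$ with the topology generated by the half-open intervals $[a,b[$, $a<b$. $\mathcal Q\mathbb R_\ell$ is the set of non-empty compact subsets of $\mathbb R_\ell$ ordered by reverse inclusion $\supseteq$; it is a dcpo whose directed suprema are intersections, and it carries its Scott topology. *)

From Stdlib Require Import Reals List.
Open Scope R_scope.

Definition subset (A B : R -> Prop) : Prop := forall x, A x -> B x.

(* The Sorgenfrey line R_l: the topology generated by the base of half-open
   intervals [a,b[, a<b.  A set is open iff it is a union of such intervals,
   i.e. iff every point x of it has some [x,b[ (b > x) inside it. *)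
Definition sorg_open (U : R -> Prop) : Prop :=
  forall x, U x -> exists b, x < b /\ subset (fun y => x <= y /\ y < b) U.

Definition sorg_compact (K : R -> Prop) : Prop :=
  forall C : (R -> Prop) -> Prop,
    (forall U, C U -> sorg_open U) ->
    (forall x, K x -> exists U, C U /\ U x) ->
    exists l : list (R -> Prop),
      (forall U, In U l -> C U) /\
      (forall x, K x -> exists U, In U l /\ U x).

Definition QRl (K : R -> Prop) : Prop := (exists x, K x) /\ sorg_compact K.

Definition qle (K L : R -> Prop) : Prop := subset L K.

Definition q_directed (D : (R -> Prop) -> Prop) : Prop :=
  (forall K, D K -> QRl K) /\
  (exists K, D K) /\
  (forall K1 K2, D K1 -> D K2 ->
     exists K3, D K3 /\ qle K1 K3 /\ qle K2 K3).

Definition q_sup (D : (R -> Prop) -> Prop) (S : R -> Prop) : Prop :=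
  QRl S /\ (forall K, D K -> qle K S) /\
  (forall L, QRl L -> (forall K, D K -> qle K L) -> qle S L).

Definition scott_open (U : (R -> Prop) -> Prop) : Prop :=
  (forall K, U K -> QRl K) /\
  (forall K L, U K -> QRl L -> qle K L -> U L) /\
  (forall D S, q_directed D -> q_sup D S -> U S ->
     exists K, D K /\ U K).

(* If {x} lies in the Scott-open set U but no [x, b[ maps into U, pick points
   y_n in [x, x + 1/(n+1)[ with {y_n} outside U.  The tails
   K_n = {x} ∪ {y_m | m >= n} are compact in R_l (a sequence together with its
   R_l-limit), they form a chain in QR_l whose supremum (intersection) is {x},
   so Scott-openness puts some K_n in U, and then {y_n} ⊆ K_n lies in U too. *)
From Stdlib Require Import Reals List.
From Stdlib Require Import Classical ClassicalEpsilon Lia Lra.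
Open Scope R_scope.

Definition finite_subcover (C : (R -> Prop) -> Prop) (A : R -> Prop) : Prop :=
  exists l : list (R -> Prop),
    (forall U, In U l -> C U) /\ (forall x, A x -> exists U, In U l /\ U x).

Lemma finite_subcover_subset (C : (R -> Prop) -> Prop) (A B : R -> Prop) :
  subset A B -> finite_subcover C B -> finite_subcover C A.
Proof.
  intros HAB [l [Hl Hcov]]. exists l. split; auto.
Qed.

Lemma finite_subcover_union (C : (R -> Prop) -> Prop) (A B : R -> Prop) :
  finite_subcover C A -> finite_subcover C B ->
  finite_subcover C (fun x => A x \/ B x).
Proof.
  intros [l1 [Hl1 Hcov1]] [l2 [Hl2 Hcov2]]. exists (l1 ++ l2). split.
  - intros U HU. apply in_app_or in HU as [HU | HU]; auto.
  - intros x [Ax | Bx].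
    + destruct (Hcov1 x Ax) as [U [HU Ux]]. exists U. split; auto using in_or_app.
    + destruct (Hcov2 x Bx) as [U [HU Ux]]. exists U. split; auto using in_or_app.
Qed.

Lemma finite_subcover_member (C : (R -> Prop) -> Prop) (V : R -> Prop) :
  C V -> finite_subcover C V.
Proof.
  intros HV. exists (V :: nil). split.
  - intros U [<- | []]. exact HV.
  - intros x Vx. exists V. split; simpl; auto.
Qed.

Lemma finite_subcover_finite_range (C : (R -> Prop) -> Prop) (y : nat -> R) (k : nat) :
  (forall m, (m < k)%nat -> exists U, C U /\ U (y m)) ->
  finite_subcover C (fun z => exists m, (m < k)%nat /\ z = y m).
Proof.
  induction k as [|k IHk]; intros Hcov.
  - exists nil. split; [intros ? [] | intros z [m [Hm _]]; lia].
  - destruct (Hcov k (Nat.lt_succ_diag_r k)) as [V [HV Vy]].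
    apply finite_subcover_subset with
      (fun z => (exists m, (m < k)%nat /\ z = y m) \/ V z).
    + intros z [m [Hm ->]]. destruct (Nat.eq_dec m k) as [-> | Hmk].
      * right. exact Vy.
      * left. exists m. split; [lia | reflexivity].
    + apply finite_subcover_union; [| now apply finite_subcover_member].
      apply IHk. intros m Hm. apply Hcov. lia.
Qed.

(* Convergence in R_l: the sets [x, b[ form a neighbourhood base at x. *)
Definition sorg_converges (y : nat -> R) (x : R) : Prop :=
  forall b, x < b -> exists N, forall m, (N <= m)%nat -> x <= y m < b.

Definition limit_range (y : nat -> R) (x : R) : R -> Prop :=
  fun z => z = x \/ exists m, z = y m.

Lemma sorg_compact_limit_range (y : nat -> R) (x : R) :
  sorg_converges y x -> sorg_compact (limit_range y x).
Proof.
  intros Hy C HC Hcov.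
  destruct (Hcov x (or_introl eq_refl)) as [V [HV Vx]].
  destruct (HC V HV x Vx) as [b [Hxb HbV]].
  destruct (Hy b Hxb) as [N HN].
  apply (finite_subcover_subset C _
           (fun z => V z \/ exists m, (m < N)%nat /\ z = y m)).
  - intros z [-> | [m ->]]; [now left |].
    destruct (Nat.lt_ge_cases m N) as [HmN | HNm].
    + right. exists m. split; auto.
    + left. apply HbV, HN, HNm.
  - apply finite_subcover_union; [now apply finite_subcover_member |].
    apply finite_subcover_finite_range. intros m _.
    apply Hcov. right. exists m. reflexivity.
Qed.

Lemma QRl_limit_range (y : nat -> R) (x : R) :
  sorg_converges y x -> QRl (limit_range y x).
Proof.
  intros Hy. split; [exists x; now left | now apply sorg_compact_limit_range].
Qed.

Lemma QRl_singleton (x : R) : QRl (fun z => z = x).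
Proof.
  split; [now exists x |].
  intros C HC Hcov. destruct (Hcov x eq_refl) as [V [HV Vx]].
  apply (finite_subcover_subset C _ V); [now intros z -> |].
  now apply finite_subcover_member.
Qed.

Lemma sorg_converges_shift (y : nat -> R) (x : R) (n : nat) :
  sorg_converges y x -> sorg_converges (fun m => y (n + m)%nat) x.
Proof.
  intros Hy b Hxb. destruct (Hy b Hxb) as [N HN].
  exists N. intros m Hm. apply HN. lia.
Qed.

Lemma limit_range_shift_antitone (y : nat -> R) (x : R) (n n' : nat) :
  (n <= n')%nat ->
  qle (limit_range (fun m => y (n + m)%nat) x) (limit_range (fun m => y (n' + m)%nat) x).
Proof.
  intros Hnn' z [-> | [m ->]]; [now left |].
  right. exists (n' - n + m)%nat. f_equal. lia.
Qed.

Lemma limit_range_shifts_meet (y : nat -> R) (x z : R) :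
  sorg_converges y x ->
  (forall n, limit_range (fun m => y (n + m)%nat) x z) -> z = x.
Proof.
  intros Hy Hz.
  assert (Hbound : forall b, x < b -> z = x \/ x <= z < b).
  { intros b Hxb. destruct (Hy b Hxb) as [N HN].
    destruct (Hz N) as [-> | [m ->]]; [now left |].
    right. apply HN. lia. }
  destruct (Hbound (x + 1) ltac:(lra)) as [-> | [Hxz _]]; auto.
  destruct (Req_dec z x) as [-> | Hzx]; auto.
  destruct (Hbound z ltac:(lra)) as [-> | [_ Hzz]]; [reflexivity | lra].
Qed.

Section Chain.

Variables (K : nat -> R -> Prop) (S : R -> Prop).
Hypothesis K_QRl : forall n, QRl (K n).
Hypothesis K_antitone : forall n n', (n <= n')%nat -> qle (K n) (K n').

Definition chain_range : (R -> Prop) -> Prop := fun L => exists n, L = K n.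

Lemma q_directed_chain : q_directed chain_range.
Proof.
  split; [| split].
  - intros L [n ->]. apply K_QRl.
  - exists (K 0%nat). now exists 0%nat.
  - intros L1 L2 [n1 ->] [n2 ->]. exists (K (Nat.max n1 n2)).
    split; [now exists (Nat.max n1 n2) |].
    split; apply K_antitone; lia.
Qed.

Hypothesis S_QRl : QRl S.
Hypothesis S_lower : forall n, qle (K n) S.
Hypothesis S_meet : forall z, (forall n, K n z) -> S z.

Lemma q_sup_chain : q_sup chain_range S.
Proof.
  split; [exact S_QRl | split].
  - intros L [n ->]. apply S_lower.
  - intros L _ HL z Lz. apply S_meet. intros n.
    apply (HL (K n)); [now exists n | exact Lz].
Qed.

Lemma scott_open_chain_meet (U : (R -> Prop) -> Prop) :
  scott_open U -> U S -> exists n, U (K n).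
Proof.
  intros [_ [_ Hinacc]] US.
  destruct (Hinacc chain_range S q_directed_chain q_sup_chain US) as [L [[n ->] UL]].
  now exists n.
Qed.

End Chain.

Lemma scott_open_singleton_converges (U : (R -> Prop) -> Prop) (y : nat -> R) (x : R) :
  scott_open U -> U (fun z => z = x) -> sorg_converges y x ->
  exists n, U (fun z => z = y n).
Proof.
  intros HU Ux Hy.
  set (K := fun n => limit_range (fun m => y (n + m)%nat) x).
  assert (HK : exists n, U (K n)).
  { apply (scott_open_chain_meet K (fun z => z = x)); auto.
    - intros n. apply QRl_limit_range, sorg_converges_shift, Hy.
    - intros n n'. apply limit_range_shift_antitone.
    - apply QRl_singleton.
    - intros n z ->. now left.
    - intros z. apply limit_range_shifts_meet, Hy. }
  destruct HK as [n UKn]. exists n.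
  destruct HU as [_ [Hup _]]. apply (Hup (K n)); [exact UKn | apply QRl_singleton |].
  intros z ->. right. exists 0%nat. now rewrite Nat.add_0_r.
Qed.

Lemma sorg_open_of_converges (A : R -> Prop) :
  (forall x y, A x -> sorg_converges y x -> exists n, A (y n)) -> sorg_open A.
Proof.
  intros HA x Ax. apply NNPP. intros Hno.
  assert (Hescape : forall n : nat, exists z, (x <= z < x + / INR (S n)) /\ ~ A z).
  { intros n. apply NNPP. intros Hn. apply Hno. exists (x + / INR (S n)).
    split; [pose proof (RinvN_pos n); rewrite S_INR; lra |].
    intros z Hz. apply NNPP. intros Az. apply Hn. now exists z. }
  destruct (choice _ Hescape) as [y Hy].
  assert (Hconv : sorg_converges y x).
  { intros b Hxb. destruct (archimed_cor1 (b - x)) as [N [HN HN0]]; [lra |].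
    exists N. intros m Hm. destruct (Hy m) as [[Hxy Hyx] _]. split; [exact Hxy |].
    assert (/ INR (S m) <= / INR N).
    { apply Rinv_le_contravar; [now apply lt_0_INR | apply le_INR; lia]. }
    lra. }
  destruct (HA x y Ax Hconv) as [n An].
  exact (proj2 (Hy n) An).
Qed.

Theorem lemma4p18 (U : (R -> Prop) -> Prop) :
  scott_open U ->
  sorg_open (fun x : R => U (fun y : R => y = x)).
Proof.
  intros HU. apply sorg_open_of_converges.
  intros x y Ux Hy. exact (scott_open_singleton_converges U y x HU Ux Hy).
Qed.
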